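(* Let $A\in\mathbb{R}^{n\times n}$, $B\in\mathbb{R}^{n\times m}$, $C\in\mathbb{R}^{p\times n}$, and let $\overline{K},\underline{K}\in\mathbb{R}^{m\times n}$ and $\overline{L},\underline{L}\in\mathbb{R}^{n\times p}$. Consider the linear system on $\mathbb{R}^{3n}$ \[ \begin{bmatrix} x \\ \overline{x} \\ \underline{x}\end{bmatrix}(t+1) = \begin{bmatrix} A & B\overline{K} & B\underline{K} \\ \overline{L}C & A-\overline{L}C+B\overline{K} & B\underline{K} \\ \underline{L}C & B\overline{K} & A-\underline{L}C+B\underline{K} \end{bmatrix} \begin{bmatrix} x \\ \overline{x} \\ \underline{x}\end{bmatrix}(t), \] and the set \[ \mathcal{X}=\{(x,\overline{x},\underline{x}) : x,\overline{x},\underline{x}\in\mathbb{R}^n_+,\ \underline{x}\le x\le \overline{x}\}. \] Then $\mathcal{X}$ is invariant under these dynamics (i.e., every trajectory starting in $\mathcal{X}$ remains in $\mathcal{X}$ for all $t\ge 0$) if and only if all of the following hold: \[ A+B(\overline{K}+\underline{K})\ge 0,\quad A+B\overline{K}\ge0,\quad B\overline{K}\ge0,\quad A-\overline{L}C\ge0,\quad A-\underline{L}C\ge0,\quad B\overline{K}+\underline{L}C\ge0 . \]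
   Context: All inequalities between matrices or vectors are element-wise. $\mathbb{R}^n_+$ denotes the closed nonnegative orthant. This system is the closed loop of $x(t+1)=Ax(t)+Bu(t)$, $y(t)=Cx(t)$ with two Luenberger observers $\overline{x}(t+1)=(A-\overline{L}C)\overline{x}(t)+\overline{L}y(t)+Bu(t)$, $\underline{x}(t+1)=(A-\underline{L}C)\underline{x}(t)+\underline{L}y(t)+Bu(t)$ (upper and lower estimates) and feedback $u(t)=\underline{K}\,\underline{x}(t)+\overline{K}\,\overline{x}(t)$. *)

From HB Require Import structures.
From mathcomp Require Import all_boot all_order all_algebra.
From mathcomp Require Import reals.
Set Implicit Arguments. Unset Strict Implicit. Unset Printing Implicit Defensive.
Import Order.TTheory GRing.Theory Num.Theory.
Local Open Scope ring_scope.

Definition mx_nonneg (R : realType) (k l : nat) (M : 'M[R]_(k, l)) : Prop :=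
  forall i j, 0 <= M i j.

Definition mx_le (R : realType) (k l : nat) (M N : 'M[R]_(k, l)) : Prop :=
  forall i j, M i j <= N i j.

(* The 3n x 3n closed-loop matrix, with state ordered (x, xbar, xlow). *)
Definition closed_loop (R : realType) (n m p : nat)
  (A : 'M[R]_n) (B : 'M[R]_(n, m)) (C : 'M[R]_(p, n))
  (Kup Klo : 'M[R]_(m, n)) (Lup Llo : 'M[R]_(n, p)) : 'M[R]_(n + n + n) :=
  block_mx
    (block_mx A (B *m Kup) (Lup *m C) (A - Lup *m C + B *m Kup))
    (col_mx (B *m Klo) (B *m Klo))
    (row_mx (Llo *m C) (B *m Kup))
    (A - Llo *m C + B *m Klo).

Definition st_x (R : realType) (n : nat) (z : 'cV[R]_(n + n + n)) : 'cV[R]_n :=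
  usubmx (usubmx z).
Definition st_xup (R : realType) (n : nat) (z : 'cV[R]_(n + n + n)) : 'cV[R]_n :=
  dsubmx (usubmx z).
Definition st_xlo (R : realType) (n : nat) (z : 'cV[R]_(n + n + n)) : 'cV[R]_n :=
  dsubmx z.

Definition in_X (R : realType) (n : nat) (z : 'cV[R]_(n + n + n)) : Prop :=
  [/\ mx_nonneg (st_x z), mx_nonneg (st_xup z), mx_nonneg (st_xlo z),
      mx_le (st_xlo z) (st_x z) & mx_le (st_x z) (st_xup z)].

Definition lin_invariant (R : realType) (k : nat) (M : 'M[R]_k) (S : 'cV[R]_k -> Prop) : Prop :=
  forall traj : nat -> 'cV[R]_k,
    (forall t, traj t.+1 = M *m traj t) -> S (traj 0%N) -> forall t, S (traj t).

From HB Require Import structures.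
From mathcomp Require Import all_boot all_order all_algebra.
From mathcomp Require Import reals.
From mathcomp Require Import ring.
Set Implicit Arguments. Unset Strict Implicit. Unset Printing Implicit Defensive.
Import Order.TTheory GRing.Theory Num.Theory.
Local Open Scope ring_scope.

(* Pass to the coordinates (xlo, x - xlo, xup - x). In them X is the
   nonnegative orthant, and the closed loop becomes block upper triangular:
   each estimation error evolves under its own observer matrix A - L C alone,
   and xlo is driven by A + B (Kup + Klo) and by the errors. A linear map
   preserves the orthant iff its matrix is entrywise nonnegative, which gives
   five of the conditions; the remaining one, A + B Kup >= 0, is the sum of
   B Kup + Llo C >= 0 and A - Llo C >= 0. *)

Section NonnegMatrices.
Variable R : realType.

Lemma mx_nonneg0 (k l : nat) : mx_nonneg (0 : 'M[R]_(k, l)).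
Proof. by move=> i j; rewrite mxE. Qed.

Lemma mx_nonnegD (k l : nat) (M N : 'M[R]_(k, l)) :
  mx_nonneg M -> mx_nonneg N -> mx_nonneg (M + N).
Proof. by move=> M_ge0 N_ge0 i j; rewrite mxE addr_ge0. Qed.

Lemma mx_nonnegM (k l q : nat) (M : 'M[R]_(k, l)) (N : 'M[R]_(l, q)) :
  mx_nonneg M -> mx_nonneg N -> mx_nonneg (M *m N).
Proof.
by move=> M_ge0 N_ge0 i j; rewrite mxE sumr_ge0 // => r _; rewrite mulr_ge0.
Qed.

Lemma mx_le_nonneg (k l : nat) (M N : 'M[R]_(k, l)) :
  mx_le M N <-> mx_nonneg (N - M).
Proof. by split=> H i j; have := H i j; rewrite !mxE subr_ge0. Qed.

Lemma mx_nonneg_col_mx (k1 k2 l : nat) (M1 : 'M[R]_(k1, l)) (M2 : 'M[R]_(k2, l)) :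
  mx_nonneg (col_mx M1 M2) <-> mx_nonneg M1 /\ mx_nonneg M2.
Proof.
split=> [H | [H1 H2] i j].
- by split=> i j; [rewrite -(col_mxEu M1 M2) | rewrite -(col_mxEd M1 M2)].
- by rewrite -[i]splitK; case: (split i) => i' /=; rewrite ?col_mxEu ?col_mxEd.
Qed.

Lemma mx_nonneg_row_mx (k l1 l2 : nat) (M1 : 'M[R]_(k, l1)) (M2 : 'M[R]_(k, l2)) :
  mx_nonneg (row_mx M1 M2) <-> mx_nonneg M1 /\ mx_nonneg M2.
Proof.
split=> [H | [H1 H2] i j].
- by split=> i j; [rewrite -(row_mxEl M1 M2) | rewrite -(row_mxEr M1 M2)].
- by rewrite -[j]splitK; case: (split j) => j' /=; rewrite ?row_mxEl ?row_mxEr.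
Qed.

Lemma mx_nonneg_block_mx (k1 k2 l1 l2 : nat)
    (Mul : 'M[R]_(k1, l1)) (Mur : 'M[R]_(k1, l2))
    (Mdl : 'M[R]_(k2, l1)) (Mdr : 'M[R]_(k2, l2)) :
  mx_nonneg (block_mx Mul Mur Mdl Mdr) <->
  [/\ mx_nonneg Mul, mx_nonneg Mur, mx_nonneg Mdl & mx_nonneg Mdr].
Proof.
rewrite block_mxEv mx_nonneg_col_mx !mx_nonneg_row_mx.
by split=> [[[? ?] [? ?]] | [? ? ? ?]].
Qed.

(* Testing against the basis vectors recovers the columns of [M]. *)
Lemma mx_nonneg_mulmxP (k l : nat) (M : 'M[R]_(k, l)) :
  mx_nonneg M <-> (forall v : 'cV[R]_l, mx_nonneg v -> mx_nonneg (M *m v)).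
Proof.
split=> [M_ge0 v | H i j]; first exact: mx_nonnegM.
have e_ge0 : mx_nonneg (delta_mx j 0 : 'cV[R]_l) by move=> r s; rewrite mxE ler0n.
by have := H _ e_ge0 i 0; rewrite -colE mxE.
Qed.

End NonnegMatrices.

Lemma lin_invariantP (R : realType) (k : nat) (M : 'M[R]_k) (S : 'cV[R]_k -> Prop) :
  lin_invariant M S <-> (forall z, S z -> S (M *m z)).
Proof.
split=> [inv z Sz | stepS traj traj_step S0].
  exact: (inv (fun t => iter t (mulmx M) z) (fun t => erefl) Sz 1%N).
by elim=> // t; rewrite traj_step; exact: stepS.
Qed.

Lemma step_invariant_conj {U V : Type} {f : U -> V} {g : U -> U} {h : V -> V}
    {S : U -> Prop} {P : V -> Prop} :
  (forall w, exists u, f u = w) -> (forall u, S u <-> P (f u)) ->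
  (forall u, f (g u) = h (f u)) ->
  (forall u, S u -> S (g u)) <-> (forall w, P w -> P (h w)).
Proof.
move=> f_surj SP fg; split=> [Sg w | Ph u].
- by case: (f_surj w) => u <-; rewrite -fg -!SP; exact: Sg.
- by rewrite !SP fg; exact: Ph.
Qed.

Section ErrorCoordinates.
Variables (R : realType) (n : nat).

Definition stack (x xup xlo : 'cV[R]_n) : 'cV[R]_(n + n + n) :=
  col_mx (col_mx x xup) xlo.

Lemma stack_st (z : 'cV[R]_(n + n + n)) : stack (st_x z) (st_xup z) (st_xlo z) = z.
Proof. by rewrite /stack /st_x /st_xup /st_xlo !vsubmxK. Qed.

Lemma st_stack (x xup xlo : 'cV[R]_n) :
  [/\ st_x (stack x xup xlo) = x, st_xup (stack x xup xlo) = xup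
    & st_xlo (stack x xup xlo) = xlo].
Proof. by rewrite /st_x /st_xup /st_xlo /stack !(col_mxKu, col_mxKd). Qed.

Definition err_coords (z : 'cV[R]_(n + n + n)) : 'cV[R]_(n + n + n) :=
  stack (st_xlo z) (st_x z - st_xlo z) (st_xup z - st_x z).

Lemma err_coords_stack (x xup xlo : 'cV[R]_n) :
  err_coords (stack x xup xlo) = stack xlo (x - xlo) (xup - x).
Proof. by rewrite /err_coords; case: (st_stack x xup xlo) => -> -> ->. Qed.

Lemma err_coords_surj (w : 'cV[R]_(n + n + n)) : exists z, err_coords z = w.
Proof.
exists (stack (st_xup w + st_x w) (st_xlo w + (st_xup w + st_x w)) (st_x w)).
by rewrite err_coords_stack !addrK stack_st.
Qed.

Lemma in_X_err_coords (z : 'cV[R]_(n + n + n)) : in_X z <-> mx_nonneg (err_coords z).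
Proof.
rewrite /err_coords /stack !mx_nonneg_col_mx.
split=> [[_ _ lo_ge0 /mx_le_nonneg ex_ge0 /mx_le_nonneg eup_ge0] //|].
case=> [[lo_ge0 ex_ge0] eup_ge0].
have x_ge0 : mx_nonneg (st_x z) by rewrite -(subrK (st_xlo z) (st_x z)); apply: mx_nonnegD.
have xup_ge0 : mx_nonneg (st_xup z) by rewrite -(subrK (st_x z) (st_xup z)); apply: mx_nonnegD.
by split=> //; apply/mx_le_nonneg.
Qed.

End ErrorCoordinates.

Section ErrorLoop.
Variables (R : realType) (n m p : nat).
Variables (A : 'M[R]_n) (B : 'M[R]_(n, m)) (C : 'M[R]_(p, n)).
Variables (Kup Klo : 'M[R]_(m, n)) (Lup Llo : 'M[R]_(n, p)).

Definition error_loop : 'M[R]_(n + n + n) :=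
  block_mx
    (block_mx (A + B *m (Kup + Klo)) (B *m Kup + Llo *m C) 0 (A - Llo *m C))
    (col_mx (B *m Kup) 0)
    0
    (A - Lup *m C).

Lemma closed_loop_stack (x xup xlo : 'cV[R]_n) :
  closed_loop A B C Kup Klo Lup Llo *m stack x xup xlo =
  stack (A *m x + B *m Kup *m xup + B *m Klo *m xlo)
        (Lup *m C *m x + (A - Lup *m C + B *m Kup) *m xup + B *m Klo *m xlo)
        (Llo *m C *m x + B *m Kup *m xup + (A - Llo *m C + B *m Klo) *m xlo).
Proof. by rewrite /closed_loop /stack !mul_block_col mul_col_mx add_col_mx mul_row_col. Qed.

Lemma error_loop_stack (e e1 e2 : 'cV[R]_n) :
  error_loop *m stack e e1 e2 =
  stack ((A + B *m (Kup + Klo)) *m e + (B *m Kup + Llo *m C) *m e1 + B *m Kup *m e2)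
        ((A - Llo *m C) *m e1) ((A - Lup *m C) *m e2).
Proof.
rewrite /error_loop /stack !mul_block_col mul_col_mx add_col_mx.
by rewrite !mul0mx !add0r addr0.
Qed.

Lemma err_coords_closed_loop (z : 'cV[R]_(n + n + n)) :
  err_coords (closed_loop A B C Kup Klo Lup Llo *m z) = error_loop *m err_coords z.
Proof.
rewrite -(stack_st z) err_coords_stack closed_loop_stack err_coords_stack error_loop_stack.
set x := st_x z; set xup := st_xup z; set xlo := st_xlo z.
rewrite !(mulmxDl, mulmxDr, mulNmx, mulmxN).
(* Abstracting the products keeps [mxE] from unfolding them into sums. *)
move: (A *m x) (A *m xup) (A *m xlo) (B *m Kup *m x) (B *m Kup *m xup)
  (B *m Kup *m xlo) (B *m Klo *m x) (B *m Klo *m xup) (B *m Klo *m xlo)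
  (Llo *m C *m x) (Llo *m C *m xlo) (Lup *m C *m x) (Lup *m C *m xup).
by move=> *; congr stack; apply/matrixP => i j; rewrite !mxE; ring.
Qed.

Lemma error_loop_nonneg :
  mx_nonneg error_loop <->
  [/\ mx_nonneg (A + B *m (Kup + Klo)), mx_nonneg (B *m Kup + Llo *m C),
      mx_nonneg (A - Llo *m C), mx_nonneg (B *m Kup) & mx_nonneg (A - Lup *m C)].
Proof.
rewrite /error_loop mx_nonneg_block_mx.
split=> [[/mx_nonneg_block_mx[? ? _ ?] /mx_nonneg_col_mx[? _] _ ?] // | [? ? ? ? ?]].
split; [apply/mx_nonneg_block_mx; split | apply/mx_nonneg_col_mx; split | |] => //;
  exact: mx_nonneg0.
Qed.

End ErrorLoop.

Theorem lemma1 (R : realType) (n m p : nat)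
  (A : 'M[R]_n) (B : 'M[R]_(n, m)) (C : 'M[R]_(p, n))
  (Kup Klo : 'M[R]_(m, n)) (Lup Llo : 'M[R]_(n, p)) :
  lin_invariant (closed_loop A B C Kup Klo Lup Llo) (@in_X R n) <->
  (mx_nonneg (A + B *m (Kup + Klo)) /\
   mx_nonneg (A + B *m Kup) /\
   mx_nonneg (B *m Kup) /\
   mx_nonneg (A - Lup *m C) /\
   mx_nonneg (A - Llo *m C) /\
   mx_nonneg (B *m Kup + Llo *m C)).
Proof.
rewrite lin_invariantP (step_invariant_conj (@err_coords_surj R n)
  (@in_X_err_coords R n) (err_coords_closed_loop A B C Kup Klo Lup Llo)).
rewrite -mx_nonneg_mulmxP error_loop_nonneg.
split=> [[c1 c6 c5 c3 c4] | [c1 [_ [c3 [c4 [c5 c6]]]]]] //.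
have c2 : mx_nonneg (A + B *m Kup).
  have -> : A + B *m Kup = (B *m Kup + Llo *m C) + (A - Llo *m C).
    by rewrite addrAC -addrA subrK addrC.
  exact: mx_nonnegD.
by do !split.
Qed.
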